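(* Let $T\in\mathbb{R}^{n\times n}$ be skew-symmetric, $S\in\mathbb{R}^{k\times k}$ skew-symmetric and $\Lambda\in\mathbb{R}^{k\times k}$ symmetric, all fixed. For $U\in\mathbb{R}^{n\times k}_{\ge 0}$ put $Q=T^{\top}US$, $P=S^{\top}U^{\top}US$ and $$F(U)=\mathrm{tr}\big(-2U^{\top}T^{\top}US+US^{\top}U^{\top}USU^{\top}+U\Lambda U^{\top}\big).$$ Assume $P_{+}+\Lambda\ge 0$ entrywise. For $U\ge 0$ and $U'$ with strictly positive entries define $$Z(U,U')=\mathrm{tr}\big(-2Q_{+}U^{\top}-UP_{-}U^{\top}\big)+\sum_{i,j}\left(\frac{[U'(P_{+}+\Lambda)]_{ij}U_{ij}^2}{U'_{ij}}+2[Q_{-}]_{ij}\frac{U_{ij}^2+U_{ij}'^2}{2U'_{ij}}\right),$$ with $Q,P$ computed from $U$. Then $Z$ is an auxiliary function of $F$, i.e. $Z(U,U')\ge F(U)$ for all such $U,U'$, and $Z(U,U)=F(U)$.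
   Context: For a real matrix $X$, $X_{+}$ and $X_{-}$ denote its positive and negative parts: $X_{+}=\max(X,0)$, $X_{-}=\max(-X,0)$ entrywise, so $X=X_{+}-X_{-}$ with $X_{\pm}\ge 0$. *)

From HB Require Import structures.
From mathcomp Require Import all_boot all_order all_algebra.
From mathcomp Require Import reals.
Set Implicit Arguments. Unset Strict Implicit. Unset Printing Implicit Defensive.
Import Order.TTheory GRing.Theory Num.Theory.
Local Open Scope ring_scope.

Section Defs.
Variable R : realType.

Definition mxpos m n (X : 'M[R]_(m, n)) : 'M[R]_(m, n) :=
  map_mx (fun x => Num.max x 0) X.
Definition mxneg m n (X : 'M[R]_(m, n)) : 'M[R]_(m, n) :=
  map_mx (fun x => Num.max (- x) 0) X.

Definition mx_nonneg m n (X : 'M[R]_(m, n)) : Prop := forall i j, 0 <= X i j.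
Definition mx_pos m n (X : 'M[R]_(m, n)) : Prop := forall i j, 0 < X i j.

Variables (n k : nat) (T : 'M[R]_n) (S Lam : 'M[R]_k).

Definition Qmx (U : 'M[R]_(n, k)) : 'M[R]_(n, k) := T^T *m U *m S.
Definition Pmx (U : 'M[R]_(n, k)) : 'M[R]_k := S^T *m U^T *m U *m S.

Definition Fobj (U : 'M[R]_(n, k)) : R :=
  \tr (- 2%:R *: (U^T *m T^T *m U *m S)) + \tr (U *m S^T *m U^T *m U *m S *m U^T)
  + \tr (U *m Lam *m U^T).

Definition Zaux (U U' : 'M[R]_(n, k)) : R :=
  \tr (- 2%:R *: (mxpos (Qmx U) *m U^T) - U *m mxneg (Pmx U) *m U^T)
  + \sum_(i < n) \sum_(j < k)
      ((U' *m (mxpos (Pmx U) + Lam)) i j * (U i j) ^+ 2 / U' i j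
       + 2%:R * mxneg (Qmx U) i j * (((U i j) ^+ 2 + (U' i j) ^+ 2) / (2%:R * U' i j))).
End Defs.

From HB Require Import structures.
From mathcomp Require Import all_boot all_order all_algebra.
From mathcomp Require Import reals.
From mathcomp Require Import ring lra.
Import Order.TTheory GRing.Theory Num.Theory.
Local Open Scope ring_scope.

(* Split Q = Q+ - Q- and P = P+ - P-.  Then F(U) and Z(U,U') share the terms
   tr(-2 Q+ U^T - U P- U^T), and the remaining terms 2 <Q-, U> and
   tr(U (P+ + Lam) U^T) of F are majorized termwise: the first by
   2 a b <= a^2 + b^2 (with b = U'_ij > 0), the second by the inequality
   u^T A u <= sum_j (v A)_j u_j^2 / v_j for symmetric nonnegative A and positive v,
   whose defect is (1/2) sum_{l,j} A_lj (v_l u_j - v_j u_l)^2 / (v_l v_j).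
   Both majorants are tight at U' = U. *)

Section Majorants.
Context {R : realType}.

Lemma mxtrace_mul_trmx m p (A B : 'M[R]_(m, p)) :
  \tr (A *m B^T) = \sum_i \sum_j A i j * B i j.
Proof. by apply: eq_bigr => i _; rewrite mxE; apply: eq_bigr => j _; rewrite mxE. Qed.

Lemma mxpos_sub_mxneg m p (X : 'M[R]_(m, p)) : mxpos X - mxneg X = X.
Proof.
apply/matrixP => i j; rewrite !mxE -{2}oppr0 -oppr_min opprK.
by rewrite addr_max_min addr0.
Qed.

Lemma mxneg_ge0 m p (X : 'M[R]_(m, p)) : mx_nonneg (mxneg X).
Proof. by move=> i j; rewrite mxE le_max lexx orbT. Qed.

Lemma trmx_mxpos m p (X : 'M[R]_(m, p)) : (mxpos X)^T = mxpos X^T.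
Proof. by apply/matrixP => i j; rewrite !mxE. Qed.

Lemma quad_form_le_majorant p (A : 'M[R]_p) (u v : 'I_p -> R) :
  A^T = A -> mx_nonneg A -> (forall j, 0 < v j) ->
  \sum_j (\sum_l u l * A l j) * u j
    <= \sum_j (\sum_l v l * A l j) * u j ^+ 2 / v j.
Proof.
move=> A_sym A_ge0 v_gt0.
have A_comm l j : A j l = A l j by rewrite -{1}A_sym mxE.
pose f l j := A l j * (v l * u j ^+ 2 / v j - u l * u j).
have defect : \sum_j (\sum_l v l * A l j) * u j ^+ 2 / v j
              - \sum_j (\sum_l u l * A l j) * u j = \sum_j \sum_l f l j.
  rewrite -sumrB; apply: eq_bigr => j _.
  by rewrite !mulr_suml -sumrB; apply: eq_bigr => l _; rewrite /f; ring.
have f_sym_ge0 j l : 0 <= f l j + f j l.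
  rewrite /f A_comm -mulrDr mulr_ge0 //.
  have vj := v_gt0 j; have vl := v_gt0 l.
  have -> : v l * u j ^+ 2 / v j - u l * u j + (v j * u l ^+ 2 / v l - u j * u l)
            = (v l * u j - v j * u l) ^+ 2 / (v j * v l).
    by field; rewrite !gt_eqF.
  by rewrite divr_ge0 ?sqr_ge0 ?mulr_ge0 ?ltW.
have : 0 <= \sum_j \sum_l f l j + \sum_j \sum_l f j l.
  rewrite -big_split; apply: sumr_ge0 => j _.
  by rewrite -big_split; apply: sumr_ge0 => l _; apply: f_sym_ge0.
rewrite [X in _ + X]exchange_big /= -defect; lra.
Qed.

Lemma le_sqr_mean (x y : R) : 0 < y -> x <= (x ^+ 2 + y ^+ 2) / (2%:R * y).
Proof.
move=> y_gt0; rewrite -subr_ge0.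
have -> : (x ^+ 2 + y ^+ 2) / (2%:R * y) - x = (x - y) ^+ 2 / (2%:R * y).
  by field; rewrite gt_eqF.
by rewrite divr_ge0 ?sqr_ge0 ?mulr_ge0 ?ltW.
Qed.

Context {m p : nat}.
Implicit Types (A : 'M[R]_p) (B U V : 'M[R]_(m, p)).

Definition quad_majorant A U V : R :=
  \sum_(i < m) \sum_(j < p) (V *m A) i j * U i j ^+ 2 / V i j.

Definition lin_majorant B U V : R :=
  \sum_(i < m) \sum_(j < p)
    2%:R * B i j * ((U i j ^+ 2 + V i j ^+ 2) / (2%:R * V i j)).

Lemma quad_majorant_ge A U V :
  A^T = A -> mx_nonneg A -> mx_pos V ->
  \tr (U *m A *m U^T) <= quad_majorant A U V.
Proof.
move=> A_sym A_ge0 V_gt0; rewrite mxtrace_mul_trmx; apply: ler_sum => i _.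
under eq_bigr do rewrite mxE.
under [leRHS]eq_bigr do rewrite mxE.
exact: quad_form_le_majorant (V_gt0 i).
Qed.

Lemma quad_majorantxx A U :
  mx_pos U -> quad_majorant A U U = \tr (U *m A *m U^T).
Proof.
move=> U_gt0; rewrite mxtrace_mul_trmx.
apply: eq_bigr => i _; apply: eq_bigr => j _.
by field; rewrite gt_eqF ?U_gt0.
Qed.

Lemma lin_majorant_ge B U V :
  mx_nonneg B -> mx_pos V -> 2%:R * \tr (B *m U^T) <= lin_majorant B U V.
Proof.
move=> B_ge0 V_gt0; rewrite mxtrace_mul_trmx mulr_sumr; apply: ler_sum => i _.
rewrite mulr_sumr; apply: ler_sum => j _.
by rewrite mulrA ler_wpM2l ?mulr_ge0 ?le_sqr_mean.
Qed.

Lemma lin_majorantxx B U :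
  mx_pos U -> lin_majorant B U U = 2%:R * \tr (B *m U^T).
Proof.
move=> U_gt0; rewrite mxtrace_mul_trmx mulr_sumr; apply: eq_bigr => i _.
rewrite mulr_sumr; apply: eq_bigr => j _.
by field; rewrite gt_eqF ?U_gt0.
Qed.

End Majorants.

Section Objective.
Variables (R : realType) (n k : nat) (T : 'M[R]_n) (S Lam : 'M[R]_k).
Implicit Types U : 'M[R]_(n, k).

Let shared U : R :=
  \tr (- 2%:R *: (mxpos (Qmx T S U) *m U^T) - U *m mxneg (Pmx S U) *m U^T).

Lemma Pmx_sym U : (Pmx S U)^T = Pmx S U.
Proof. by rewrite /Pmx !trmx_mul !trmxK !mulmxA. Qed.

Lemma Fobj_split U :
  Fobj T S Lam U = shared U + \tr (U *m (mxpos (Pmx S U) + Lam) *m U^T)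
                   + 2%:R * \tr (mxneg (Qmx T S U) *m U^T).
Proof.
rewrite /Fobj /shared.
have -> : U^T *m T^T *m U *m S = U^T *m Qmx T S U by rewrite /Qmx !mulmxA.
have -> : U *m S^T *m U^T *m U *m S *m U^T = U *m Pmx S U *m U^T
  by rewrite /Pmx !mulmxA.
rewrite mxtraceZ mxtrace_mulC -{1}[Qmx T S U]mxpos_sub_mxneg.
rewrite -{1}[Pmx S U]mxpos_sub_mxneg.
rewrite !(mulmxDl, mulmxBl, mulmxDr, mulmxBr, mulNmx, mulmxN) /=.
rewrite !(mxtraceD, mxtraceZ, raddfN) /=.
ring.
Qed.

Lemma Zaux_split U U' :
  Zaux T S Lam U U' = shared U + quad_majorant (mxpos (Pmx S U) + Lam) U U'
                      + lin_majorant (mxneg (Qmx T S U)) U U'.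
Proof.
rewrite /Zaux -addrA; congr (_ + _).
by rewrite -big_split; apply: eq_bigr => i _; rewrite -big_split.
Qed.

End Objective.

Theorem lemma3 (R : realType) (n k : nat) (T : 'M[R]_n) (S Lam : 'M[R]_k) :
  T^T = - T -> S^T = - S -> Lam^T = Lam ->
  (forall (U U' : 'M[R]_(n, k)),
      mx_nonneg U -> mx_pos U' ->
      mx_nonneg (mxpos (Pmx S U) + Lam) ->
      Fobj T S Lam U <= Zaux T S Lam U U') /\
  (forall (U : 'M[R]_(n, k)),
      mx_pos U -> mx_nonneg (mxpos (Pmx S U) + Lam) ->
      Zaux T S Lam U U = Fobj T S Lam U).
Proof.
move=> _ _ Lam_sym.
have A_sym (U : 'M[R]_(n, k)) : (mxpos (Pmx S U) + Lam)^T = mxpos (Pmx S U) + Lam.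
  by rewrite raddfD /= trmx_mxpos Pmx_sym Lam_sym.
split=> [U U' _ U'_gt0 A_ge0 | U U_gt0 _].
- rewrite Fobj_split Zaux_split lerD ?lerD2l //.
  + exact: quad_majorant_ge.
  + by apply: lin_majorant_ge => //; apply: mxneg_ge0.
- by rewrite Fobj_split Zaux_split quad_majorantxx ?lin_majorantxx.
Qed.
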